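(* Let $\mathcal{G}$ be a finite groupoid and $\mathcal{H}$ a connected wide subgroupoid of $\mathcal{G}$. Then $\mathbb{C}[\mathcal{G}/\mathcal{H}]\cong Y_\mathcal{H}$ as functors $\mathcal{G}\to\mathbf{Vect}_\mathbb{C}$.
   Context: A groupoid is a category in which every morphism is invertible; all groupoids are finite and nonempty; $gg'$ denotes composition. A subgroupoid is wide if it contains all objects, connected if any two of its objects are joined by one of its morphisms. For $x\in\mathcal{G}_0$ let $\mathrm{Mor}_\mathcal{G}(-,x):=\coprod_{y\in\mathcal{G}_0}\mathcal{G}(y,x)$ with equivalence relation $a\sim_{\mathcal{H},x}b\iff a^{-1}b\in\mathcal{H}_1$, class of $a$ written $a\mathcal{H}$. The $\mathcal{G}$-set $\mathcal{G}/\mathcal{H}$ sends $x$ to $\mathrm{Mor}_\mathcal{G}(-,x)/\sim_{\mathcal{H},x}$ and $g:x\to y$ to $a\mathcal{H}\mapsto ga\mathcal{H}$; $\mathbb{C}[\mathcal{G}/\mathcal{H}]$ is its composite with the free complex vector space functor. $Y_\mathcal{H}:\mathcal{G}\to\mathbf{Vect}_\mathbb{C}$ is given by $Y_\mathcal{H}(G):=\{f:\mathrm{Mor}_\mathcal{G}(-,G)\to\mathbb{C}\mid f(gh)=f(g)\text{ for all } g\in\mathrm{Mor}_\mathcal{G}(-,G),\ h\in\mathcal{H}_1,\ \mathrm{dom}\,g=\mathrm{cod}\,h\}$ (pointwise vector space structure) and, for $g:G\to G'$, $Y_\mathcal{H}(g)(f):=f(g^{-1}\,-)$. *)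

From HB Require Import structures.
From mathcomp Require Import all_boot all_order all_algebra.
From mathcomp Require Import complex.
From mathcomp Require Import Rstruct.
Set Implicit Arguments. Unset Strict Implicit. Unset Printing Implicit Defensive.
Import Order.TTheory GRing.Theory Num.Theory.
Local Open Scope ring_scope.

Definition CC : fieldType := (Rdefinitions.R)[i].

(** A finite nonempty groupoid, presented as a finite set of objects, a finite
    set of morphisms with domain/codomain maps, identities, inverses, and a
    composition [comp g g'] (= g g', "g after g'") that is only constrained
    (and only ever used) when [dom g = cod g']. *)
Record groupoid := Groupoid {
  obj : finType;
  mor : finType;
  dom : mor -> obj;
  cod : mor -> obj;
  idm : obj -> mor;
  comp : mor -> mor -> mor;
  inv : mor -> mor;
  obj_nonempty : (0 < #|obj|)%N;
  dom_idm : forall x, dom (idm x) = x;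
  cod_idm : forall x, cod (idm x) = x;
  dom_comp : forall g h, dom g = cod h -> dom (comp g h) = dom h;
  cod_comp : forall g h, dom g = cod h -> cod (comp g h) = cod g;
  compA : forall f g h, dom f = cod g -> dom g = cod h ->
            comp f (comp g h) = comp (comp f g) h;
  comp1m : forall g, comp (idm (cod g)) g = g;
  compm1 : forall g, comp g (idm (dom g)) = g;
  dom_inv : forall g, dom (inv g) = cod g;
  cod_inv : forall g, cod (inv g) = dom g;
  compVm : forall g, comp (inv g) g = idm (dom g);
  compmV : forall g, comp g (inv g) = idm (cod g)
}.

Section Groupoids.
Variable G : groupoid.
Local Notation O := (obj G).
Local Notation M := (mor G).
Local Notation dom := (@dom G).
Local Notation cod := (@cod G).
Local Notation comp := (@comp G).
Local Notation inv := (@inv G).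
Local Notation idm := (@idm G).

Definition is_subgroupoid (H0 : {set O}) (H1 : {set M}) : Prop :=
  [/\ forall h, h \in H1 -> dom h \in H0 /\ cod h \in H0,
      forall x, x \in H0 -> idm x \in H1,
      forall g h, g \in H1 -> h \in H1 -> dom g = cod h -> comp g h \in H1
    & forall h, h \in H1 -> inv h \in H1].

Definition wide (H0 : {set O}) : Prop := H0 = [set: O].

Definition connected_sub (H0 : {set O}) (H1 : {set M}) : Prop :=
  forall x y, x \in H0 -> y \in H0 ->
    exists h, [/\ h \in H1, dom h = x & cod h = y].

Variable H : {set M}.

Definition MorTo (x : O) := {g : M | cod g == x}.

Definition cls (a : M) : {set M} :=
  [set b | (cod b == cod a) && (comp (inv a) b \in H)].

Definition is_class_at (x : O) (C : {set M}) : bool :=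
  [exists a, (cod a == x) && (C == cls a)].
Definition GmodH (x : O) := {C : {set M} | is_class_at x C}.

(** C[(G/H)(x)] : the free complex vector space on (G/H)(x), as
    (finitely supported = all) functions (G/H)(x) -> C. *)
Definition CGH (x : O) := {ffun GmodH x -> CC}.

(** Left translation of a class by g : the set { g b | b in C }; for C = aH
    this is the class (g a)H. *)
Definition transl (g : M) (C : {set M}) : {set M} := [set comp g b | b in C].

(** C[G/H](g) : C[(G/H)(dom g)] -> C[(G/H)(cod g)], the linear extension of
    aH |-> g a H, i.e. the push-forward of coefficients. *)
Definition CGH_map (g : M) (v : CGH (dom g)) : CGH (cod g) :=
  [ffun D => \sum_(C : GmodH (dom g) | transl g (val C) == val D) v C].

Definition FunTo (x : O) := {ffun MorTo x -> CC}.

Definition inY (x : O) (f : FunTo x) : Prop :=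
  forall (g g' : MorTo x) (h : M), h \in H -> dom (val g) = cod h ->
    val g' = comp (val g) h -> f g' = f g.

(** Extension by zero of f : Mor(-,x) -> C to all morphisms (only evaluated
    on Mor(-,x)). *)
Definition ext (x : O) (f : FunTo x) (m : M) : CC :=
  if insub m is Some k then f k else 0.

Definition Y_map (g : M) (f : FunTo (dom g)) : FunTo (cod g) :=
  [ffun k : MorTo (cod g) => ext f (comp (inv g) (val k))].

Definition nat_iso_CGH_Y (phi : forall x : O, CGH x -> FunTo x) : Prop :=
  [/\ forall x (a : CC) (v w : CGH x),
        phi x [ffun s => a * v s + w s] = [ffun k => a * phi x v k + phi x w k],
      forall x (v : CGH x), inY (phi x v),
      forall x (v w : CGH x), phi x v = phi x w -> v = w,
      forall x (f : FunTo x), inY f -> exists v, phi x v = f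
    & forall (g : M) (v : CGH (dom g)),
        phi (cod g) (CGH_map v) = Y_map (phi (dom g) v)].

End Groupoids.

(** The class map [Mor(-,x) -> (G/H)(x)], [k |-> kH], is surjective, so
    precomposition with it identifies functions on [(G/H)(x)], i.e. the free
    vector space [C[(G/H)(x)]], with the functions on [Mor(-,x)] that are
    constant on classes, which is exactly [Y_H(x)].  Since [g] maps the class
    [(g^-1 k)H] to [kH] and translation by [g] is injective on classes, the
    push-forward [C[G/H](g)] evaluated at [kH] is the coefficient at
    [(g^-1 k)H], which is [Y_H(g)] read through this identification. *)

From Pilot Require Import Defs.
From mathcomp Require Import all_boot all_order all_algebra.

Set Implicit Arguments. Unset Strict Implicit. Unset Printing Implicit Defensive.
Local Open Scope ring_scope.

Ltac domcod := repeat first [ rewrite dom_inv | rewrite cod_inv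
  | rewrite dom_idm | rewrite cod_idm
  | rewrite dom_comp; [|by domcod] | rewrite cod_comp; [|by domcod] ];
  try congruence.

Section GroupoidAlgebra.
Variable G : groupoid.
Local Notation M := (mor G).
Local Notation dom := (@Defs.dom G).
Local Notation cod := (@Defs.cod G).
Local Notation idm := (@Defs.idm G).
Local Notation comp := (@Defs.comp G).
Local Notation inv := (@Defs.inv G).

Lemma inv_unique (g f : M) :
  dom g = cod f -> comp g f = idm (dom f) -> g = inv f.
Proof.
move=> gf gfE; rewrite -[g]compm1 gf -(compmV f) Defs.compA ?gfE; try by domcod.
by rewrite -(cod_inv f) comp1m.
Qed.

Lemma invK (a : M) : inv (inv a) = a.
Proof. by symmetry; apply: inv_unique; rewrite ?compmV; domcod. Qed.

Lemma invM (g a : M) : dom g = cod a -> inv (comp g a) = comp (inv a) (inv g).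
Proof.
move=> ga; symmetry; apply: inv_unique; first by domcod.
rewrite -Defs.compA ?(@Defs.compA _ (inv g) g a); try by domcod.
by rewrite compVm ga comp1m compVm dom_comp.
Qed.

Lemma compKm (g a : M) : dom g = cod a -> comp (inv g) (comp g a) = a.
Proof. by move=> ga; rewrite Defs.compA ?compVm ?ga ?comp1m; domcod. Qed.

Lemma compKVm (g k : M) : cod k = cod g -> comp g (comp (inv g) k) = k.
Proof. by move=> kg; rewrite Defs.compA ?compmV -?kg ?comp1m; domcod. Qed.

Lemma compV_trans (x y z : M) : cod x = cod y -> cod y = cod z ->
  comp (comp (inv x) y) (comp (inv y) z) = comp (inv x) z.
Proof. by move=> xy yz; rewrite -Defs.compA ?compKVm; domcod. Qed.

End GroupoidAlgebra.

Section Classes.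
Variables (G : groupoid) (H : {set mor G}).
Local Notation M := (mor G).
Local Notation dom := (@Defs.dom G).
Local Notation cod := (@Defs.cod G).
Local Notation idm := (@Defs.idm G).
Local Notation comp := (@Defs.comp G).
Local Notation inv := (@Defs.inv G).
Local Notation cls := (cls H).

Lemma mem_cls (a b : M) :
  reflect (cod b = cod a /\ comp (inv a) b \in H) (b \in cls a).
Proof. by rewrite inE; apply: (iffP andP) => [[/eqP]|[->]]. Qed.

Lemma transl_cls (g a : M) : dom g = cod a -> transl g (cls a) = cls (comp g a).
Proof.
move=> ga; apply/setP=> c; apply/imsetP/mem_cls.
  case=> b /mem_cls[ba abH] ->; split; first by domcod.
  by rewrite invM // -Defs.compA ?compKm; domcod.
case=> cga gacH; have cg : cod c = cod g by rewrite cga; domcod.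
exists (comp (inv g) c); last by rewrite compKVm.
by apply/mem_cls; rewrite Defs.compA -?invM; domcod.
Qed.

Lemma transl_clsK (g a : M) :
  dom g = cod a -> transl (inv g) (transl g (cls a)) = cls a.
Proof. by move=> ga; rewrite !transl_cls ?compKm; domcod. Qed.

Hypothesis H_idm : forall x, idm x \in H.
Hypothesis H_comp :
  forall g h, g \in H -> h \in H -> dom g = cod h -> comp g h \in H.
Hypothesis H_inv : forall h, h \in H -> inv h \in H.

Lemma cls_refl (a : M) : a \in cls a.
Proof. by apply/mem_cls; rewrite compVm. Qed.

Lemma cls_of_mem (a b : M) : b \in cls a -> cls b = cls a.
Proof.
case/mem_cls=> ba abH; apply/setP=> c; apply/mem_cls/mem_cls=> -[cb cH].
  split; first congruence.
  by rewrite -(@compV_trans _ a b c); try apply: H_comp; domcod.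
have baH : comp (inv b) a \in H by rewrite -[a]invK -invM ?H_inv; domcod.
split; first congruence.
by rewrite -(@compV_trans _ b a c); try apply: H_comp; domcod.
Qed.

Lemma cls_comp (a h : M) : h \in H -> dom a = cod h -> cls (comp a h) = cls a.
Proof. by move=> hH ah; apply/cls_of_mem/mem_cls; rewrite compKm; domcod. Qed.

Lemma clsofP (x : obj G) (k : MorTo x) : is_class_at H x (cls (val k)).
Proof. by apply/existsP; exists (val k); rewrite (valP k) eqxx. Qed.

Definition clsof (x : obj G) (k : MorTo x) : GmodH H x :=
  exist _ (cls (val k)) (clsofP k).

Lemma clsof_repr (x : obj G) (C : GmodH H x) : {k : MorTo x | clsof k = C}.
Proof.
have /sigW[a /andP[ax /eqP CE]] := existsP (valP C).
by exists (Sub a ax); apply: val_inj; rewrite /= CE.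
Qed.

Lemma transl_clsof_eq (g : M) (C : GmodH H (dom g)) (k : MorTo (cod g))
    (k' : MorTo (dom g)) :
  val k' = comp (inv g) (val k) -> (transl g (val C) == cls (val k)) = (C == clsof k').
Proof.
have /eqP kg := valP k; move=> k'E.
have [a /andP[/eqP ag /eqP CE]] := existsP (valP C).
have kE : cls (val k) = transl g (cls (val k')).
  by rewrite k'E transl_cls ?compKVm; domcod.
have k'g : cod (val k') = dom g by apply/eqP/(valP k').
rewrite -[C == _]val_eqE /= CE kE; apply/eqP/eqP => [translE|-> //].
by rewrite -(@transl_clsK g a) ?translE ?transl_clsK.
Qed.

Lemma CGH_map_clsof (g : M) (v : CGH H (dom g)) (k : MorTo (cod g))
    (k' : MorTo (dom g)) :
  val k' = comp (inv g) (val k) -> CGH_map v (clsof k) = v (clsof k').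
Proof.
move=> k'E; rewrite ffunE (big_pred1 (clsof k')) // => C.
exact: transl_clsof_eq.
Qed.

Definition cgh_to_fun (x : obj G) (v : CGH H x) : FunTo x :=
  [ffun k => v (clsof k)].

Lemma cgh_to_fun_linear (x : obj G) (a : CC) (v w : CGH H x) :
  cgh_to_fun [ffun s => a * v s + w s] =
  [ffun k => a * cgh_to_fun v k + cgh_to_fun w k].
Proof. by apply/ffunP=> k; rewrite !ffunE. Qed.

Lemma cgh_to_fun_inY (x : obj G) (v : CGH H x) : inY H (cgh_to_fun v).
Proof.
move=> k k' h hH kh k'E; rewrite !ffunE; congr (v _); apply: val_inj.
by rewrite /= k'E cls_comp.
Qed.

Lemma cgh_to_fun_inj (x : obj G) : injective (@cgh_to_fun x).
Proof.
move=> v w /ffunP vw; apply/ffunP=> C; have [k <-] := clsof_repr C.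
by have := vw k; rewrite !ffunE.
Qed.

Lemma cgh_to_fun_onto (x : obj G) (f : FunTo x) :
  inY H f -> exists v, cgh_to_fun v = f.
Proof.
move=> fY; exists [ffun C => f (sval (clsof_repr C))]; apply/ffunP=> k.
rewrite !ffunE; case: clsof_repr => k' /= /(congr1 val) /= k'k.
have /mem_cls[kk' k'kH] : val k \in cls (val k') by rewrite k'k cls_refl.
by symmetry; apply: (fY k' k (comp (inv (val k')) (val k))); rewrite ?compKVm;
  domcod.
Qed.

Lemma ext_val (x : obj G) (f : FunTo x) (k : MorTo x) (m : M) :
  m = val k -> ext f m = f k.
Proof.
move=> ->; rewrite /ext; case: insubP => [u _ uk|]; last by rewrite (valP k).
by congr (f _); apply: val_inj.
Qed.

Lemma cgh_to_fun_natural (g : M) (v : CGH H (dom g)) :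
  cgh_to_fun (CGH_map v) = Y_map (cgh_to_fun v).
Proof.
apply/ffunP=> k; have /eqP kg := valP k.
have k'g : cod (comp (inv g) (val k)) == dom g by apply/eqP; domcod.
pose k' : MorTo (dom g) := Sub (comp (inv g) (val k)) k'g.
by rewrite ffunE (@CGH_map_clsof _ _ _ k') // ffunE (@ext_val _ _ k') // ffunE.
Qed.

End Classes.

Theorem theorem5p3 (G : groupoid) (H0 : {set obj G}) (H1 : {set mor G}) :
  is_subgroupoid H0 H1 -> wide H0 -> connected_sub H0 H1 ->
  exists phi : forall x : obj G, CGH H1 x -> FunTo x, nat_iso_CGH_Y phi.
Proof.
case=> _ H0_idm H1_comp H1_inv H0_wide _.
have H1_idm x : Defs.idm x \in H1 by rewrite H0_idm // H0_wide inE.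
exists (@cgh_to_fun G H1); split.
- exact: cgh_to_fun_linear.
- exact: cgh_to_fun_inY.
- by move=> x; apply: cgh_to_fun_inj.
- exact: cgh_to_fun_onto.
- exact: cgh_to_fun_natural.
Qed.
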